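(* Let $R$ be a unital ring, $e\in R$ an idempotent and $\alpha:R\to eRe$ a ring isomorphism. If $e$ is a full idempotent, i.e. $ReR=R$, then the corner skew Laurent polynomial ring $R[t_+,t_-;\alpha]$ is strongly $\mathbb{Z}$-graded.
   Context: $R[t_+,t_-;\alpha]$ is the universal unital ring equipped with a unital ring homomorphism $i:R\to R[t_+,t_-;\alpha]$ and elements $t_+,t_-$ satisfying $t_-t_+=1$, $t_+t_-=i(e)$, $i(r)t_-=t_-i(\alpha(r))$ and $t_+i(r)=i(\alpha(r))t_+$ for all $r\in R$. It is $\mathbb{Z}$-graded by $A_0=i(R)$, $A_i=Rt_+^{-i}$ for $i<0$ and $A_i=t_-^iR$ for $i>0$ (so $t_-\in A_1$, $t_+\in A_{-1}$). A $\mathbb{Z}$-graded ring is strongly graded if $A_mA_n=A_{m+n}$ for all $m,n$. *)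

From HB Require Import structures.
From mathcomp Require Import all_boot all_order all_algebra.
Set Implicit Arguments. Unset Strict Implicit. Unset Printing Implicit Defensive.
Import GRing.Theory.
Local Open Scope ring_scope.

(* The additive subgroup generated by all products p*q with P p, Q q:
   the product "A_m A_n" of two additive subgroups of a ring. *)
Definition prodset (A : pzRingType) (P Q : A -> Prop) (x : A) : Prop :=
  exists s : seq (A * A),
    (forall pq, pq \in s -> P pq.1 /\ Q pq.2) /\ x = \sum_(pq <- s) pq.1 * pq.2.

Definition is_idempotent (R : pzRingType) (e : R) : Prop := e * e = e.

Definition full_idem (R : pzRingType) (e : R) : Prop :=
  forall x : R, exists s : seq (R * R), x = \sum_(ab <- s) ab.1 * e * ab.2.

(* alpha : R -> eRe is a ring isomorphism (eRe has unit e) *)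
Definition corner_iso (R : pzRingType) (e : R) (alpha : R -> R) : Prop :=
  [/\ forall x y, alpha (x + y) = alpha x + alpha y,
      forall x y, alpha (x * y) = alpha x * alpha y,
      alpha 1 = e,
      injective alpha &
      forall y, (exists r, alpha r = y) <-> (exists r, y = e * r * e)].

Definition corner_rels (R S : pzRingType) (e : R) (alpha : R -> R)
    (j : R -> S) (tp tm : S) : Prop :=
  [/\ tm * tp = 1, tp * tm = j e,
      forall r, j r * tm = tm * j (alpha r) &
      forall r, tp * j r = j (alpha r) * tp].

Definition is_corner_skew_Laurent (R A : pzRingType) (e : R) (alpha : R -> R)
    (i : {rmorphism R -> A}) (tp tm : A) : Prop :=
  corner_rels e alpha i tp tm /\
  forall (S : pzRingType) (j : {rmorphism R -> S}) (sp sm : S),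
    corner_rels e alpha j sp sm ->
    (exists phi : {rmorphism A -> S},
        (forall r, phi (i r) = j r) /\ phi tp = sp /\ phi tm = sm) /\
    (forall phi psi : {rmorphism A -> S},
        (forall r, phi (i r) = j r) -> phi tp = sp -> phi tm = sm ->
        (forall r, psi (i r) = j r) -> psi tp = sp -> psi tm = sm ->
        forall x, phi x = psi x).

(* The homogeneous components: A_0 = i(R), A_{-k} = i(R) t_+^k, A_k = t_-^k i(R) *)
Definition laurent_comp (R A : pzRingType) (i : R -> A) (tp tm : A) (n : int) (x : A)
    : Prop :=
  match n with
  | Posz k => exists r, x = tm ^+ k * i r
  | Negz k => exists r, x = i r * tp ^+ k.+1
  end.

Definition strongly_graded (A : pzRingType) (C : int -> A -> Prop) : Prop :=
  forall (m n : int) (x : A), prodset (C m) (C n) x <-> C (m + n)%R x.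

(* The relations give [tp^k i(r) = i(alpha^k r) tp^k],
   [i(r) tm^k = tm^k i(alpha^k r)] and [tp^k i(R) tm^k <= i(R)]; since alpha
   maps onto the corner eRe, also [tm^k i(R) tp^k <= i(R)].  Hence every
   product A_m A_n lies in A_(m+n), and such a grading is strong as soon as
   1 lies in A_m A_(-m) for every m.  For m >= 0 this is [tm^m tp^m = 1].  For
   A_(-k) A_k argue by induction on k: [i(e) = tp 1 tm] lies in
   A_(-(k+1)) A_(k+1), and fullness writes 1 as a sum of terms a e b. *)

From HB Require Import structures.
From mathcomp Require Import all_boot all_order all_algebra.
Set Implicit Arguments. Unset Strict Implicit. Unset Printing Implicit Defensive.
Local Open Scope ring_scope.
Import GRing.Theory.

Section Prodset.
Variables (A : pzRingType) (P Q : A -> Prop).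

Lemma prodset0 : prodset P Q 0.
Proof. by exists [::]; rewrite big_nil. Qed.

Lemma prodsetD x y : prodset P Q x -> prodset P Q y -> prodset P Q (x + y).
Proof.
case=> s [Ps ->] [t [Pt ->]]; exists (s ++ t); split; last by rewrite big_cat.
by move=> pq; rewrite mem_cat => /orP [/Ps|/Pt].
Qed.

Lemma prodset_mul p q : P p -> Q q -> prodset P Q (p * q).
Proof.
move=> Pp Qq; exists [:: (p, q)]; split; last by rewrite big_seq1.
by move=> pq; rewrite inE => /eqP ->.
Qed.

Lemma prodset_sum (T : Type) (s : seq T) (F : T -> A) :
  (forall t, prodset P Q (F t)) -> prodset P Q (\sum_(t <- s) F t).
Proof.
move=> PF; elim: s => [|t s IHs]; first by rewrite big_nil; exact: prodset0.
by rewrite big_cons; apply: prodsetD.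
Qed.

Lemma prodset_sub (S : A -> Prop) :
  S 0 -> (forall x y, S x -> S y -> S (x + y)) ->
  (forall p q, P p -> Q q -> S (p * q)) ->
  forall x, prodset P Q x -> S x.
Proof.
move=> S0 SD SM x [s [Ps ->]]; elim: s Ps => [|pq s IHs] Ps; first by rewrite big_nil.
rewrite big_cons; apply: SD; last by apply: IHs => pq' s_pq'; apply: Ps; rewrite inE s_pq' orbT.
by have [Pp Qq] := Ps pq (mem_head _ _); apply: SM.
Qed.

Lemma prodset_mulLR (P' Q' : A -> Prop) u v x :
  prodset P Q x -> (forall p, P p -> P' (u * p)) -> (forall q, Q q -> Q' (q * v)) ->
  prodset P' Q' (u * x * v).
Proof.
case=> s [Ps ->] PP' QQ'; exists (map (fun pq => (u * pq.1, pq.2 * v)) s); split.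
  by move=> pq /mapP [pq' /Ps [Pp Qq] ->]; split; [apply: PP'|apply: QQ'].
rewrite big_map mulr_sumr mulr_suml; apply: eq_bigr => pq _ /=.
by rewrite !mulrA.
Qed.

End Prodset.

Lemma strongly_graded_of_prodset1 (A : pzRingType) (C : int -> A -> Prop) :
  (forall n, C n 0) -> (forall n x y, C n x -> C n y -> C n (x + y)) ->
  (forall m n p q, C m p -> C n q -> C (m + n) (p * q)) ->
  (forall m, prodset (C m) (C (- m)) 1) -> strongly_graded C.
Proof.
move=> C0 CD CM C1 m n x; split; first exact: prodset_sub (CD _) (CM m n) x.
move=> Cx; have -> : x = 1 * 1 * x by rewrite !mul1r.
apply: (prodset_mulLR (C1 m)) => [p Cp|q Cq]; first by rewrite mul1r.
by rewrite -[n](addKr m); apply: CM.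
Qed.

Lemma int_natN (m : int) : exists k : nat, m = k \/ m = - k%:Z.
Proof. by case: m => k; [exists k; left | exists k.+1; right; rewrite NegzE]. Qed.

Section CornerSkewLaurent.
Variables (R A : pzRingType) (e : R) (alpha : R -> R).
Variables (i : {rmorphism R -> A}) (tp tm : A).
Hypothesis rels : corner_rels e alpha i tp tm.
Local Notation C := (laurent_comp i tp tm).

Lemma tmX_tpX k : tm ^+ k * tp ^+ k = 1.
Proof.
have [tmtp _ _ _] := rels; elim: k => [|k IHk]; first by rewrite mulr1.
by rewrite exprS exprSr -mulrA (mulrA (tm ^+ k)) IHk mul1r.
Qed.

Lemma i_mul_tmX k r : i r * tm ^+ k = tm ^+ k * i (iter k alpha r).
Proof.
have [_ _ i_tm _] := rels; elim: k => [|k IHk]; first by rewrite mulr1 mul1r.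
by rewrite exprSr mulrA IHk -mulrA i_tm mulrA.
Qed.

Lemma tpX_mul_i k r : tp ^+ k * i r = i (iter k alpha r) * tp ^+ k.
Proof.
have [_ _ _ tp_i] := rels; elim: k => [|k IHk]; first by rewrite mulr1 mul1r.
by rewrite exprS -mulrA IHk mulrA tp_i -mulrA.
Qed.

Lemma laurent_compN (k : nat) x : C (- k%:Z) x <-> exists r, x = i r * tp ^+ k.
Proof.
case: k => [|k]; last by rewrite -NegzE.
by rewrite oppr0; split=> -[r ->]; exists r; rewrite mulr1 mul1r.
Qed.

Lemma laurent_comp0 n : C n 0.
Proof. by case: n => k; exists 0; rewrite rmorph0 ?mulr0 ?mul0r. Qed.

Lemma laurent_compD n x y : C n x -> C n y -> C n (x + y).
Proof. by case: n => k [r ->] [s ->]; exists (r + s); rewrite rmorphD ?mulrDr ?mulrDl. Qed.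

Lemma laurent_comp_mull n r x : C n x -> C n (i r * x).
Proof.
case: n => k [s ->]; last by exists (r * s); rewrite rmorphM mulrA.
by exists (iter k alpha r * s); rewrite mulrA i_mul_tmX rmorphM mulrA.
Qed.

Lemma laurent_comp_mulr n r x : C n x -> C n (x * i r).
Proof.
case: n => k [s ->]; first by exists (s * r); rewrite rmorphM mulrA.
by exists (s * iter k.+1 alpha r); rewrite -mulrA tpX_mul_i rmorphM mulrA.
Qed.

Hypothesis alphaM : {morph alpha : x y / x * y}.
Hypothesis alpha1 : alpha 1 = e.
Hypothesis alpha_onto_corner : forall r, exists s, alpha s = e * r * e.

Lemma tm_i_tp r : exists s, tm * i r * tp = i s.
Proof.
have [tmtp tptm i_tm _] := rels.
have tm_ie : tm * i e = tm by rewrite -tptm mulrA tmtp mul1r.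
have ie_tp : i e * tp = tp by rewrite -tptm -mulrA tmtp mulr1.
have [s alpha_s] := alpha_onto_corner r; exists s.
have -> : tm * i r * tp = tm * i (e * r * e) * tp.
  by rewrite !rmorphM !mulrA tm_ie -(mulrA _ (i e)) ie_tp.
by rewrite -alpha_s -i_tm -mulrA tmtp mulr1.
Qed.

Lemma tmX_i_tpX k r : exists s, tm ^+ k * i r * tp ^+ k = i s.
Proof.
elim: k r => [|k IHk] r; first by exists r; rewrite mulr1 mul1r.
have [s Es] := IHk r; have [u Eu] := tm_i_tp s; exists u.
suff -> : tm ^+ k.+1 * i r * tp ^+ k.+1 = tm * (tm ^+ k * i r * tp ^+ k) * tp by rewrite Es.
by rewrite exprS exprSr !mulrA.
Qed.

Lemma tpX_i_tmX k r : tp ^+ k * i r * tm ^+ k = i (iter k alpha r).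
Proof.
have [_ tptm _ tp_i] := rels; elim: k => [|k IHk]; first by rewrite mulr1 mul1r.
suff -> : tp ^+ k.+1 * i r * tm ^+ k.+1 = tp * (tp ^+ k * i r * tm ^+ k) * tm.
  by rewrite IHk tp_i -mulrA tptm -rmorphM -alpha1 -alphaM mulr1.
by rewrite exprS exprSr !mulrA.
Qed.

Lemma laurent_comp_tmX_i_tpX a b r : C (a%:Z - b%:Z) (tm ^+ a * i r * tp ^+ b).
Proof.
case: (leqP b a) => [le_ba|lt_ab].
  have [s Es] := tmX_i_tpX b r; rewrite subzn //; exists s.
  by rewrite -Es !mulrA -(exprD tm (a - b) b) subnK.
have [s Es] := tmX_i_tpX a r.
rewrite -opprB subzn; last exact: ltnW.
apply/laurent_compN; exists s.
by rewrite -Es -[RHS]mulrA -(exprD tp a (b - a)) subnKC // ltnW.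
Qed.

Lemma laurent_comp_tpX_tmX a b : C (b%:Z - a%:Z) (tp ^+ a * tm ^+ b).
Proof.
have tpX_tmX k : tp ^+ k * tm ^+ k = i (iter k alpha 1).
  by rewrite -(tpX_i_tmX k 1) rmorph1 mulr1.
case: (leqP a b) => [le_ab|lt_ba].
  rewrite subzn //; exists (iter (b - a) alpha (iter a alpha 1)).
  by rewrite -i_mul_tmX -tpX_tmX -[RHS]mulrA -(exprD tm a (b - a)) subnKC.
rewrite -opprB subzn; last exact: ltnW.
apply/laurent_compN.
exists (iter (a - b) alpha (iter b alpha 1)).
by rewrite -tpX_mul_i -tpX_tmX [RHS]mulrA -(exprD tp (a - b) b) subnK // ltnW.
Qed.

Lemma laurent_compM m n p q : C m p -> C n q -> C (m + n) (p * q).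
Proof.
have [a [->|->]] := int_natN m; have [b [->|->]] := int_natN n.
- move=> [r ->] [s ->]; rewrite -PoszD; exists (iter b alpha r * s).
  by rewrite mulrA -(mulrA _ (i r)) i_mul_tmX rmorphM !mulrA exprD.
- move=> [r ->] /laurent_compN [s ->].
  by rewrite mulrA -(mulrA _ (i r)) -rmorphM; apply: laurent_comp_tmX_i_tpX.
- move=> /laurent_compN [r ->] [s ->]; rewrite addrC.
  rewrite mulrA -(mulrA (i r)); apply/laurent_comp_mulr/laurent_comp_mull.
  exact: laurent_comp_tpX_tmX.
- move=> /laurent_compN [r ->] /laurent_compN [s ->].
  rewrite -opprD -PoszD; apply/laurent_compN; exists (r * iter a alpha s).
  by rewrite -mulrA (mulrA (tp ^+ a)) tpX_mul_i rmorphM exprD !mulrA.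
Qed.

Hypothesis full : full_idem e.

Lemma prodset_laurent_compN_1 k : prodset (C (- k%:Z)) (C k%:Z) 1.
Proof.
have [_ tptm i_tm tp_i] := rels; elim: k => [|k IHk].
  rewrite -[1]mulr1 -{1}(rmorph1 i); apply: prodset_mul.
    by apply/laurent_compN; exists 1; rewrite mulr1.
  by exists 1; rewrite mul1r rmorph1.
have ie_prod : prodset (C (- k.+1%:Z)) (C k.+1%:Z) (i e).
  have -> : i e = tp * 1 * tm by rewrite mulr1 tptm.
  apply: (prodset_mulLR IHk).
    move=> _ /laurent_compN [r ->]; apply/laurent_compN; exists (alpha r).
    by rewrite mulrA tp_i -mulrA -exprS.
  by move=> _ [r ->]; exists (alpha r); rewrite -mulrA i_tm mulrA -exprSr.
rewrite -(rmorph1 i); have [s ->] := full 1; rewrite rmorph_sum; apply: prodset_sum => ab.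
rewrite !rmorphM; apply: (prodset_mulLR ie_prod) => [p|q];
  [exact: laurent_comp_mull | exact: laurent_comp_mulr].
Qed.

Lemma prodset_laurent_comp_1 m : prodset (C m) (C (- m)) 1.
Proof.
have [k [->|->]] := int_natN m; last by rewrite opprK; apply: prodset_laurent_compN_1.
rewrite -(tmX_tpX k); apply: prodset_mul; first by exists 1; rewrite rmorph1 mulr1.
by apply/laurent_compN; exists 1; rewrite rmorph1 mul1r.
Qed.

End CornerSkewLaurent.

Theorem mainTheorem7 (R A : pzRingType) (e : R) (alpha : R -> R)
    (i : {rmorphism R -> A}) (tp tm : A) :
  is_idempotent e -> corner_iso e alpha ->
  is_corner_skew_Laurent e alpha i tp tm ->
  full_idem e ->
  strongly_graded (laurent_comp i tp tm).
Proof.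
move=> _ [_ alphaM alpha1 _ alpha_img] [rels _] full.
have alpha_onto_corner r : exists s, alpha s = e * r * e by apply/alpha_img; exists r.
apply: strongly_graded_of_prodset1.
- exact: laurent_comp0.
- exact: laurent_compD.
- exact: laurent_compM rels alphaM alpha1 alpha_onto_corner.
- exact: prodset_laurent_comp_1 rels full.
Qed.
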